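(* Consider the binary delegated search model described in the context, with the additional constraint that at most $n$ options (where $n<m$) can be examined for feasibility. There exists a mechanism for the principal such that, when the agent (subject to the same limit of examining at most $n$ options) best-responds to it, the principal's expected net value is at least $\frac12\left(1-\frac1e\right)$ times the expected net value of the optimal search procedure that the principal could run herself subject to the same limit of examining at most $n$ options. Here the principal's net value in delegation is her value of the accepted proposal minus the total examination cost incurred by the agent.
   Context: Binary model: there are $m$ options $\omega_1,\ldots,\omega_m$. Option $\omega_i$ is feasible with probability $p_i>0$, independently of the other options. If feasible it yields the commonly known utility $x_i\ge 0$ to the principal and $y_i$ to the agent; if infeasible it yields $0$ to both. Determining whether $\omega_i$ is feasible requires paying a known cost $c_i\ge 0$, and it is assumed that $c_i\le p_i y_i$ for every $i$. In delegated search the agent adaptively chooses options to examine, paying their costs, and proposes one option. The principal, using a mechanism, either accepts it (receiving the $x$-value of the option if it is feasible) or rejects it (status quo, value $0$). The agent maximizes the expected $y$-value of the accepted proposal minus his examination costs. A search procedure for the principal herself adaptively examines options (paying costs), stops at any time, and selects at most one examined feasible option. Its net value is the $x$-value of the selected option minus the total examination costs. *)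

From HB Require Import structures.
From mathcomp Require Import all_boot all_order all_algebra.
From mathcomp Require Import reals sequences.
Set Implicit Arguments. Unset Strict Implicit. Unset Printing Implicit Defensive.
Import Order.TTheory GRing.Theory Num.Theory.
Local Open Scope ring_scope.

(* An adaptive search procedure over the options 'I_m, as a decision tree:
   - [Stop None]      : stop, select nothing;
   - [Stop (Some i)]  : stop, select (propose) option i;
   - [Exam i tF tI]   : pay c_i to examine option i, continue with tF if it is
                        feasible and with tI if it is infeasible. *)
Inductive proc (m : nat) : Type :=
| Stop of option 'I_m
| Exam of 'I_m & proc m & proc m.

Arguments Stop {m}.
Arguments Exam {m}.

Fixpoint valid_from (m : nat) (E : seq ('I_m * bool)) (k : nat) (t : proc m)
  : bool :=
  match t with
  | Stop None => true
  | Stop (Some i) => (i, true) \in E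
  | Exam i tF tI =>
      [&& (0 < k)%N, i \notin map fst E,
          valid_from ((i, true) :: E) k.-1 tF
        & valid_from ((i, false) :: E) k.-1 tI]
  end.

Definition valid_proc (m n : nat) (t : proc m) : bool := valid_from [::] n t.

(* Expected net value of procedure t when selecting (a feasible) option i
   yields reward r i; option i is feasible with probability p i independently
   of the others, and examining it costs c i. *)
Fixpoint exp_value (R : realType) (m : nat) (p c r : 'I_m -> R) (t : proc m)
  : R :=
  match t with
  | Stop None => 0
  | Stop (Some i) => r i
  | Exam i tF tI =>
      - c i + p i * exp_value p c r tF + (1 - p i) * exp_value p c r tI
  end.

(* A mechanism accepts a proposed option i with probability q i (q i in {0,1}
   for a deterministic acceptance set).  The agent's expected utility of a
   search-and-propose strategy t: *)
Definition agent_utility (R : realType) (m : nat) (p c y q : 'I_m -> R)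
  (t : proc m) : R := exp_value p c (fun i => q i * y i) t.

Definition principal_delegated (R : realType) (m : nat) (p c x q : 'I_m -> R)
  (t : proc m) : R := exp_value p c (fun i => q i * x i) t.

Definition principal_own (R : realType) (m : nat) (p c x : 'I_m -> R)
  (t : proc m) : R := exp_value p c x t.

Definition best_response (R : realType) (m n : nat) (p c y q : 'I_m -> R)
  (t : proc m) : Prop :=
  valid_proc n t /\
  forall t' : proc m, valid_proc n t' ->
    agent_utility p c y q t' <= agent_utility p c y q t.

(* Let r_i = x_i - c_i / p_i be the principal's reservation value of option i
   and, for a threshold T, let S(T) be the largest total of p_i (r_i - T)^+
   over at most n options.  Any search of the principal earns at most
   T + S(T): examining option i costs c_i and raises the running maximum of
   T and the values found so far by at most p_i (x_i - T)^+ in expectation,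
   i.e. by at most p_i (r_i - T)^+ net of the cost.  S is continuous and
   nonincreasing, so it has a fixed point T = S(T).  The mechanism accepts
   exactly the options i of an optimal set for S(T) with r_i >= T.  Among the
   agent's best responses is Weitzman's rule: examine the acceptable options
   in decreasing order of y_i - c_i / p_i and propose the first feasible one.
   Whatever the order, this search earns the principal at least
   T (1 - Q) + Q S(T) = T, where Q is the probability that nothing is found.
   So delegation secures half of the optimum, and 1/2 >= (1 - 1/e) / 2. *)

From HB Require Import structures.
From mathcomp Require Import all_boot all_order all_algebra.
From mathcomp Require Import reals topology normedtype sequences exp.
From mathcomp Require Import ring lra.
Import Order.TTheory GRing.Theory Num.Theory numFieldNormedType.Exports.
Set Implicit Arguments. Unset Strict Implicit. Unset Printing Implicit Defensive.
Local Open Scope ring_scope.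

Section BestSum.
Variables (R : realDomainType) (I : finType).

Definition best_sum (a : I -> R) (U : {set I}) (k : nat) : R :=
  \big[Num.max/0]_(A : {set I} | (A \subset U) && (#|A| <= k)%N) \sum_(i in A) a i.

Lemma le_best_sum (a : I -> R) (U : {set I}) k (A : {set I}) :
  A \subset U -> (#|A| <= k)%N -> \sum_(i in A) a i <= best_sum a U k.
Proof.
move=> AU Ak; rewrite /best_sum (bigD1 A) /=; last by rewrite AU Ak.
by rewrite le_max lexx.
Qed.

Lemma best_sum_ge0 (a : I -> R) (U : {set I}) k : 0 <= best_sum a U k.
Proof.
by have := @le_best_sum a U k finset.set0 (sub0set U); rewrite cards0 big_set0; apply.
Qed.

Lemma best_sum_attained (a : I -> R) (U : {set I}) k :
  exists A : {set I},
    [/\ A \subset U, (#|A| <= k)%N & best_sum a U k = \sum_(i in A) a i].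
Proof.
apply: (big_ind (fun v => exists A : {set I},
  [/\ A \subset U, (#|A| <= k)%N & v = \sum_(i in A) a i])).
- by exists finset.set0; rewrite sub0set cards0 big_set0.
- move=> _ _ [A [AU Ak ->]] [B [BU Bk ->]].
  by case: leP => _; [exists B | exists A].
- by move=> A /andP[AU Ak]; exists A.
Qed.

Lemma best_sum_setD1 (a : I -> R) (U : {set I}) k i :
  i \in U -> a i + best_sum a (U :\ i) k <= best_sum a U k.+1.
Proof.
move=> iU; have [A [AU Ak ->]] := best_sum_attained a (U :\ i) k.
have iA : i \notin A by apply: contra (subsetP AU i) _; rewrite !inE eqxx.
rewrite -big_setU1 //=; apply: le_best_sum; last by rewrite cardsU1 iA.
by rewrite subUset sub1set iU (subset_trans AU) ?subD1set.
Qed.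

Lemma best_sum_le_shift (a b : I -> R) (d : R) (U : {set I}) k :
  0 <= d -> (forall i, a i <= b i + d) ->
  best_sum a U k <= best_sum b U k + k%:R * d.
Proof.
move=> d0 ab; have [A [AU Ak ->]] := best_sum_attained a U k.
apply: (le_trans (y := \sum_(i in A) (b i + d))); first exact: ler_sum.
rewrite big_split /= sumr_const -[d *+ _]mulr_natl.
by apply: lerD; [exact: le_best_sum | rewrite ler_wpM2r // ler_nat].
Qed.

End BestSum.

Lemma max_sub_max_le (R : realDomainType) (x y z : R) :
  x <= y -> Num.max y z - Num.max x z <= y - x.
Proof.
move=> xy; rewrite lerBlDr ge_max.
have x_le : x <= Num.max x z by rewrite le_max lexx.
have z_le : z <= Num.max x z by rewrite le_max lexx orbT.
by apply/andP; split; lra.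
Qed.

Section ExpectedMaximum.
Variables (R : realFieldType) (I : eqType) (p v : I -> R).
Hypotheses (p_ge0 : forall j, 0 <= p j) (p_le1 : forall j, p j <= 1).

(* Expected value of the largest of [L] and the prizes [v j], [j \in l], where
   prize [v j] is won independently with probability [p j]. *)
Fixpoint exp_max (L : R) (l : seq I) : R :=
  match l with
  | [::] => L
  | j :: l' => p j * exp_max (Num.max L (v j)) l' + (1 - p j) * exp_max L l'
  end.

Lemma exp_max_ge L l : L <= exp_max L l.
Proof.
elim: l L => [|j l IH] L //=.
have h1 : p j * L <= p j * exp_max (Num.max L (v j)) l.
  by rewrite ler_wpM2l // (le_trans _ (IH _)) // le_max lexx.
have h2 : (1 - p j) * L <= (1 - p j) * exp_max L l.
  by rewrite ler_wpM2l ?subr_ge0.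
lra.
Qed.

Lemma exp_max_sub_le L L' l : L <= L' -> exp_max L' l - exp_max L l <= L' - L.
Proof.
elim: l L L' => [|j l IH] L L' LL' //=.
have max_le : Num.max L (v j) <= Num.max L' (v j) by rewrite le_max2.
have max_sub := max_sub_max_le (v j) LL'.
have h1 : p j * (exp_max (Num.max L' (v j)) l - exp_max (Num.max L (v j)) l)
    <= p j * (L' - L) by rewrite ler_wpM2l // (le_trans (IH _ _ max_le)).
have h2 : (1 - p j) * (exp_max L' l - exp_max L l) <= (1 - p j) * (L' - L).
  by rewrite ler_wpM2l ?subr_ge0 ?IH.
lra.
Qed.

Lemma exp_max_cat_cons L l1 j l2 :
  exp_max L (l1 ++ j :: l2) = exp_max L (j :: l1 ++ l2).
Proof.
elim: l1 L => [|i l1 IH] L //=; rewrite !IH /= maxAC [Num.max (Num.max L (v j)) _]maxAC.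
ring.
Qed.

Lemma exp_max_perm L l1 l2 : perm_eq l1 l2 -> exp_max L l1 = exp_max L l2.
Proof.
elim: l1 l2 L => [|j l1 IH] l2 L.
  by move=> /perm_size/esym/size0nil ->.
move=> l1l2; have /splitPr jl2 : j \in l2 by rewrite -(perm_mem l1l2) mem_head.
move: l1l2; case: _ / jl2 => l2a l2b l1l2.
have l1_perm : perm_eq l1 (l2a ++ l2b).
  by rewrite -(perm_cons j) (perm_trans l1l2) // -cat1s perm_catCA.
by rewrite exp_max_cat_cons /= !(IH _ _ l1_perm).
Qed.

Lemma exp_max_rem L l j : j \in l ->
  exp_max L l
    = p j * exp_max (Num.max L (v j)) (rem j l) + (1 - p j) * exp_max L (rem j l).
Proof. by move=> /perm_to_rem /exp_max_perm ->. Qed.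

Lemma exp_max_id L l : {in l, forall j, v j <= L} -> exp_max L l = L.
Proof.
elim: l => [|j l IH] //= vL; rewrite (max_idPl (vL j (mem_head _ _))).
by rewrite IH; [ring | move=> i il; apply: vL; rewrite inE il orbT].
Qed.

Lemma exp_max_exam_le j y K l : v j <= y ->
  p j * exp_max (Num.max y K) l - p j * (y - v j)
    <= p j * exp_max (Num.max K (v j)) l.
Proof.
move=> vy; rewrite (maxC K) lerBlDr -mulrDr ler_wpM2l // addrC -lerBlDr.
apply: le_trans (exp_max_sub_le _ (le_max2 vy (lexx K))) _.
exact: max_sub_max_le.
Qed.

End ExpectedMaximum.

Lemma filter_notin_cons (I : eqType) (s : seq I) i (F : seq I) : uniq s ->
  [seq j <- s | j \notin i :: F] = rem i [seq j <- s | j \notin F].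
Proof.
move=> us; rewrite rem_filter ?filter_uniq // -filter_predI.
by apply: eq_filter => j; rewrite /= inE negb_or.
Qed.

Section BestFound.
Variables (R : realDomainType) (I : eqType) (v : I -> R) (b : R).

Definition best_found (E : seq (I * bool)) : R :=
  foldr (fun e acc => if e.2 then Num.max (v e.1) acc else acc) b E.

Lemma best_found_ge E : b <= best_found E.
Proof. by elim: E => [|[i []] E IH] //=; rewrite le_max IH orbT. Qed.

Lemma best_found_mem E i : (i, true) \in E -> v i <= best_found E.
Proof.
elim: E => [|[j e] E IH] //=; rewrite inE => /orP[/eqP [<- <-] | /IH].
  by rewrite le_max lexx.
by case: e => // vi; rewrite le_max vi orbT.
Qed.

End BestFound.

Definition unexamined (I : finType) (E : seq (I * bool)) : {set I} :=
  [set j | j \notin map fst E].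

Lemma unexamined_cons (I : finType) (E : seq (I * bool)) i e :
  unexamined ((i, e) :: E) = unexamined E :\ i.
Proof. by apply/setP => j; rewrite !inE negb_or andbC. Qed.

Fixpoint first_feasible (m : nat) (l : seq 'I_m) : proc m :=
  match l with
  | [::] => Stop None
  | j :: l' => Exam j (Stop (Some j)) (first_feasible l')
  end.

Lemma first_feasible_valid (m : nat) (l : seq 'I_m) E k :
  uniq l -> {in l, forall j, j \notin map fst E} -> (size l <= k)%N ->
  valid_from E k (first_feasible l).
Proof.
elim: l E k => [|j l IH] E [|k] //= /andP[jl ul] lE sk.
rewrite lE ?mem_head //=; apply: IH => // i il.
rewrite /= inE negb_or lE ?inE ?il ?orbT // andbT.
by apply: contraNneq jl => <-.
Qed.

Section SearchModel.
Variables (R : realType) (m : nat) (p c : 'I_m -> R).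
Hypotheses (p_gt0 : forall i, 0 < p i) (p_le1 : forall i, p i <= 1)
  (c_ge0 : forall i, 0 <= c i).

Let p_ge0 i : 0 <= p i. Proof. exact: ltW. Qed.
Let q_ge0 i : 0 <= 1 - p i. Proof. by rewrite subr_ge0. Qed.

Definition reservation (v : 'I_m -> R) i : R := v i - c i / p i.

Lemma mul_sub_reservation v i : p i * (v i - reservation v i) = c i.
Proof. by rewrite /reservation opprB addrC subrK mulrC divfK ?gt_eqF. Qed.

Lemma reservation_le v i : reservation v i <= v i.
Proof. by rewrite /reservation gerBl divr_ge0. Qed.

Lemma reservation_ge0 v i : c i <= p i * v i -> 0 <= reservation v i.
Proof. by rewrite subr_ge0 ler_pdivrMr // mulrC. Qed.

Definition surplus (x : 'I_m -> R) (T : R) i : R :=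
  p i * Num.max (reservation x i - T) 0.

Lemma exam_gain_le_surplus x T B i :
  T <= B -> p i * (Num.max (x i) B - B) - c i <= surplus x T i.
Proof.
move=> TB; have pc := mul_sub_reservation x i.
have gain_le : Num.max (x i) B - B <= Num.max (x i - T) 0.
  case: (leP (x i) B) => _; first by rewrite subrr le_max lexx orbT.
  by rewrite le_max lerB.
apply: (le_trans (y := p i * Num.max (x i - T) 0 - c i)).
  by rewrite lerD2r ler_wpM2l.
have surplus_ge : p i * (reservation x i - T) <= surplus x T i.
  by rewrite ler_wpM2l // le_max lexx.
have surplus_ge0 : 0 <= surplus x T i by rewrite mulr_ge0 // le_max lexx orbT.
case: (leP (x i - T) 0) => _; last lra.
by rewrite mulr0 sub0r (le_trans _ surplus_ge0) ?oppr_le0.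
Qed.

Lemma own_value_le x T : 0 <= T -> forall t E k, valid_from E k t ->
  exp_value p c x t <= best_found x T E + best_sum (surplus x T) (unexamined E) k.
Proof.
move=> T0; elim=> [[i|]|i tF IHF tI IHI] E k /=.
- move=> iE; apply: le_trans (best_found_mem x T iE) _.
  by rewrite lerDl best_sum_ge0.
- by move=> _; rewrite addr_ge0 ?best_sum_ge0 // (le_trans T0) ?best_found_ge.
case/and4P; case: k => // k _ iE vF vI.
have := IHF _ _ vF; have := IHI _ _ vI; rewrite /= !unexamined_cons => hI hF.
have iU : i \in unexamined E by rewrite inE.
have step := best_sum_setD1 (surplus x T) k iU.
have gain := exam_gain_le_surplus x i (best_found_ge x T E).
have hF' := ler_wpM2l (p_ge0 i) hF; have hI' := ler_wpM2l (q_ge0 i) hI.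
lra.
Qed.

Lemma surplus_le_shift x a b i : surplus x a i <= surplus x b i + `|a - b|.
Proof.
rewrite /surplus; set z := reservation x i.
have max_le : Num.max (z - a) 0 <= Num.max (z - b) 0 + `|a - b|.
  have zb : z - b <= Num.max (z - b) 0 by rewrite le_max lexx.
  have max_ge0 : 0 <= Num.max (z - b) 0 by rewrite le_max lexx orbT.
  have ba : b - a <= `|a - b| by rewrite distrC ler_norm.
  have := normr_ge0 (a - b); rewrite ge_max => ?; apply/andP; split; lra.
have p_norm : p i * `|a - b| <= `|a - b| by rewrite ler_piMl.
have := ler_wpM2l (p_ge0 i) max_le; lra.
Qed.

Lemma surplus_antitone x a b i : a <= b -> surplus x b i <= surplus x a i.
Proof. by move=> ab; rewrite ler_wpM2l // le_max2 ?lerB. Qed.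

Lemma best_surplus_lipschitz x (U : {set 'I_m}) k a b :
  `|best_sum (surplus x a) U k - best_sum (surplus x b) U k| <= k%:R * `|a - b|.
Proof.
have hab := best_sum_le_shift U k (normr_ge0 (a - b)) (surplus_le_shift x a b).
have hba := best_sum_le_shift U k (normr_ge0 (b - a)) (surplus_le_shift x b a).
rewrite distrC in hba; rewrite ler_norml; apply/andP; split; lra.
Qed.

Lemma best_surplus_antitone x (U : {set 'I_m}) k a b : a <= b ->
  best_sum (surplus x b) U k <= best_sum (surplus x a) U k.
Proof.
move=> ab; rewrite -[leRHS]addr0 -(mulr0 k%:R).
by apply: best_sum_le_shift => // i; rewrite addr0 surplus_antitone.
Qed.

(* Weitzman's bound, with the agent's reservation values as prizes. *)
Lemma agent_value_le y r (s : seq 'I_m) : uniq s ->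
  {in s, forall i, r i = y i} -> (forall i, i \notin s -> r i = 0) ->
  forall t E k, valid_from E k t ->
  exp_value p c r t
    <= exp_max p (reservation y) (best_found r 0 E) [seq j <- s | j \notin map fst E].
Proof.
move=> us r_in r_out; have exp_max_ge := exp_max_ge (reservation y) p_ge0 p_le1.
elim=> [[i|]|i tF IHF tI IHI] E k /=.
- by move=> iE; apply: le_trans (best_found_mem r 0 iE) _.
- by move=> _; apply: le_trans (best_found_ge r 0 E) _.
case/and4P=> _ iE vF vI.
have := IHF _ _ vF; have := IHI _ _ vI; rewrite /= !filter_notin_cons // => hI hF.
set K := best_found r 0 E in hF hI *.
set l := [seq j <- s | j \notin map fst E] in hF hI *.
have hF' := ler_wpM2l (p_ge0 i) hF; have hI' := ler_wpM2l (q_ge0 i) hI.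
have [si | nsi] := boolP (i \in s).
- have il : i \in l by rewrite mem_filter iE si.
  have exam := exp_max_exam_le p_ge0 p_le1 K (rem i l) (reservation_le y i).
  rewrite mul_sub_reservation in exam; rewrite r_in // in hF'.
  rewrite (exp_max_rem _ _ _ il); lra.
have nil : i \notin l by rewrite mem_filter (negbTE nsi) andbF.
rewrite rem_id // in hF' hI'; rewrite r_out // (max_idPr (best_found_ge r 0 E)) in hF'.
have := c_ge0 i; lra.
Qed.

Lemma exp_value_first_feasible y r l :
  {in l, forall j, r j = y j} ->
  sorted (fun i j => reservation y j <= reservation y i) l ->
  {in l, forall j, 0 <= reservation y j} ->
  exp_value p c r (first_feasible l) = exp_max p (reservation y) 0 l.
Proof.
elim: l => [|j l IH] //= r_in l_sorted l_ge0.
have l_sub : {subset l <= j :: l} := mem_behead (s := j :: l).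
have j_max : {in l, forall i, reservation y i <= reservation y j}.
  apply/allP; apply: order_path_min l_sorted => a b d ba db; exact: le_trans db ba.
have IH' := IH (sub_in1 l_sub r_in) (path_sorted l_sorted) (sub_in1 l_sub l_ge0).
rewrite (max_idPr (l_ge0 j (mem_head _ _))) (exp_max_id _ j_max) IH'.
by rewrite r_in ?mem_head // -(mul_sub_reservation y j); ring.
Qed.

Lemma first_feasible_value_ge x r T l :
  {in l, forall j, r j = x j} -> {in l, forall j, T <= reservation x j} ->
  T * (1 - \prod_(j <- l) (1 - p j))
      + \prod_(j <- l) (1 - p j) * \sum_(j <- l) p j * (reservation x j - T)
    <= exp_value p c r (first_feasible l).
Proof.
elim: l => [|j l IH] r_in l_ge /=.
  by rewrite !big_nil subrr mulr0 mul1r addr0.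
have l_sub : {subset l <= j :: l} := mem_behead (s := j :: l).
have rest := ler_wpM2l (q_ge0 j) (IH (sub_in1 l_sub r_in) (sub_in1 l_sub l_ge)).
rewrite !big_cons.
set Q := \prod_(i <- l) _ in rest *; set S := \sum_(i <- l) _ in rest *.
have Q_ge0 : 0 <= Q by apply: prodr_ge0 => i _; exact: q_ge0.
have Q_le1 : Q <= 1 by apply: prodr_ile1 => i _; rewrite q_ge0 gerBl p_ge0.
have head : - c j + p j * r j = p j * reservation x j.
  by rewrite r_in ?mem_head // -(mul_sub_reservation x j); ring.
have gain : 0 <= p j * (reservation x j - T) * (1 - (1 - p j) * Q).
  by rewrite !mulr_ge0 ?p_ge0 ?subr_ge0 ?l_ge ?mem_head // mulr_ile1 // gerBl.
lra.
Qed.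

Lemma first_feasible_best_response n y q s :
  (forall i, c i <= p i * y i) -> uniq s -> (size s <= n)%N ->
  sorted (fun i j => reservation y j <= reservation y i) s ->
  (forall i, q i = (i \in s)%:R) ->
  best_response n p c y q (first_feasible s).
Proof.
move=> cy us sn s_sorted qs.
have r_in : {in s, forall i, q i * y i = y i} by move=> i si; rewrite qs si mul1r.
have r_out i : i \notin s -> q i * y i = 0 by move=> /negbTE nsi; rewrite qs nsi mul0r.
split=> [|t vt]; first exact: first_feasible_valid.
have := agent_value_le us r_in r_out vt.
have -> : [seq j <- s | j \notin map fst ([::] : seq ('I_m * bool))] = s.
  by apply/all_filterP/allP.
rewrite /agent_utility (exp_value_first_feasible r_in s_sorted) // => i _.
exact: reservation_ge0.
Qed.

Lemma sum_surplus x T (A : {set 'I_m}) :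
  \sum_(i in A) surplus x T i
    = \sum_(i in A | T <= reservation x i) p i * (reservation x i - T).
Proof.
rewrite (bigID (fun i => T <= reservation x i)) /= [X in _ + X]big1 ?addr0.
  by apply: eq_bigr => i /andP[_ Tr]; rewrite /surplus (max_idPl _) // subr_ge0.
move=> i /andP[_]; rewrite -ltNge => rT.
by rewrite /surplus (max_idPr _) ?mulr0 // subr_le0 ltW.
Qed.

Lemma threshold_mechanism n x y T :
  (forall i, c i <= p i * y i) -> best_sum (surplus x T) setT n = T ->
  exists q : 'I_m -> R, (forall i, 0 <= q i <= 1) /\
    exists sigma : proc m,
      best_response n p c y q sigma /\ T <= principal_delegated p c x q sigma.
Proof.
move=> cy ST; have [A [_ An AT]] := best_sum_attained (surplus x T) setT n.
pose A' := [set i in A | T <= reservation x i].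
pose s := sort (fun i j => reservation y j <= reservation y i) (enum A').
have mem_s i : (i \in s) = (i \in A') by rewrite mem_sort mem_enum.
have us : uniq s by rewrite sort_uniq enum_uniq.
exists (fun i => (i \in s)%:R); split=> [i|].
  by case: (i \in s); rewrite ?lexx ?ler01.
exists (first_feasible s); split.
  apply: first_feasible_best_response => //.
    rewrite size_sort -cardE (leq_trans _ An) // subset_leq_card //.
    by apply/subsetP => i; rewrite inE => /andP[].
  by apply: sort_sorted => i j; exact: le_total.
have sum_s : \sum_(j <- s) p j * (reservation x j - T) = T.
  rewrite -[RHS]ST AT sum_surplus (perm_big _ (permEl (perm_sort _ _))).
  by rewrite big_enum_cond; apply: eq_bigl => i; rewrite inE andbT.
have r_in : {in s, forall i, (i \in s)%:R * x i = x i} by move=> i ->; rewrite mul1r.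
have T_le : {in s, forall i, T <= reservation x i}.
  by move=> i; rewrite mem_s inE => /andP[].
have := first_feasible_value_ge r_in T_le; rewrite sum_s.
by rewrite mulrBr mulr1 [_ * T]mulrC subrK.
Qed.

End SearchModel.

Lemma lipschitz_continuous (R : realType) (f : R -> R) (L : R) : 0 <= L ->
  (forall a b, `|f a - f b| <= L * `|a - b|) -> continuous f.
Proof.
move=> L0 f_lip x; apply/cvgrPdist_lt => e e0.
have L1 : 0 < L + 1 by rewrite ltr_wpDl.
near=> y; apply: le_lt_trans (f_lip x y) _.
have : `|x - y| < e / (L + 1).
  near: y; apply/nbhs_ballP; exists (e / (L + 1)); first by rewrite /= divr_gt0.
  by move=> z /=; rewrite /ball /=.
rewrite ltr_pdivlMr // => xy.
apply: le_lt_trans xy; rewrite mulrC ler_wpM2l //; lra.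
Unshelve. all: by end_near.
Qed.

Lemma antitone_fixpoint (R : realType) (f : R -> R) :
  continuous f -> (forall t, 0 <= f t) -> {homo f : a b /~ a <= b} ->
  exists2 T, 0 <= T & f T = T.
Proof.
move=> f_cont f_ge0 f_anti.
have g_cont : continuous (fun t => t - f t).
  by move=> t; apply: continuousB => //; apply: f_cont.
have [|T] := IVT (v := 0) (f_ge0 0) (continuous_subspaceT g_cont).
  by rewrite /= sub0r ge_min le_max oppr_le0 f_ge0 subr_ge0 f_anti ?f_ge0 ?orbT.
by rewrite in_itv /= => /andP[T0 _] /subr0_eq fT; exists T.
Qed.

Theorem mainTheorem2 (R : realType) (m n : nat) (p x y c : 'I_m -> R) :
  (n < m)%N ->
  (forall i, 0 < p i /\ p i <= 1) ->
  (forall i, 0 <= x i) ->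
  (forall i, 0 <= c i /\ c i <= p i * y i) ->
  exists q : 'I_m -> R,
    (forall i, 0 <= q i <= 1) /\
    exists sigma : proc m,
      best_response n p c y q sigma /\
      forall tau : proc m, valid_proc n tau ->
        (1 / 2) * (1 - expR (- 1)) * principal_own p c x tau
          <= principal_delegated p c x q sigma.
Proof.
move=> _ hp _ hc.
have p_gt0 i := (hp i).1; have p_le1 i := (hp i).2; have c_ge0 i := (hc i).1.
have [T T_ge0 fixT] : exists2 T, 0 <= T & best_sum (surplus p c x T) setT n = T.
  apply: antitone_fixpoint => [|t|a b]; last exact: best_surplus_antitone.
  - apply: lipschitz_continuous (ler0n _ n) _.
    exact: best_surplus_lipschitz.
  - exact: best_sum_ge0.
have [q [q01 [sigma [sigma_br deleg_ge]]]] :=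
  threshold_mechanism p_gt0 p_le1 c_ge0 (fun i => (hc i).2) fixT.
exists q; split=> //; exists sigma; split=> // tau tau_valid.
have own_le : principal_own p c x tau <= T + T.
  have := own_value_le p_gt0 p_le1 c_ge0 x T_ge0 tau_valid.
  by rewrite (_ : unexamined [::] = setT) ?fixT //; apply/setP => i; rewrite !inE.
have e_ge0 : 0 <= expR (-1 : R) := expR_ge0 _.
have e_le1 : expR (-1 : R) <= 1 by rewrite expR_le1 oppr_le0.
nra.
Qed.
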